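(* Let $G$ be a matrix with entries from a field $\mathbb{F}$, with row index set $S$ and column index set $T$. Suppose $S=S_1\cup\cdots\cup S_m$ and $T=T_1\cup\cdots\cup T_n$ are partitions into pairwise disjoint sets. Let $s_1,\dots,s_m,t_1,\dots,t_n$ be non-negative integers with $\sum_{i=1}^m s_i=\sum_{j=1}^n t_j=R$. Then there exist subsets $\mathbf{s}_1\subseteq S_1,\dots,\mathbf{s}_m\subseteq S_m$ and $\mathbf{t}_1\subseteq T_1,\dots,\mathbf{t}_n\subseteq T_n$ with $|\mathbf{s}_i|=s_i$ for all $i$ and $|\mathbf{t}_j|=t_j$ for all $j$ such that the $R\times R$ submatrix $G\big(\bigcup_{i=1}^m\mathbf{s}_i,\bigcup_{j=1}^n\mathbf{t}_j\big)$ is nonsingular, if and only if for every $I\subseteq\{1,\dots,m\}$ and every $K\subseteq\{1,\dots,n\}$, \[ \operatorname{rank}\Big(G\big(\textstyle\bigcup_{i\in I}S_i,\bigcup_{k\in K}T_k\big)\Big)\ \ge\ \sum_{i\in I}s_i+\sum_{k\in K}t_k-R . \]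
   Context: For $\mathbf{s}\subseteq S$ and $\mathbf{t}\subseteq T$, $G(\mathbf{s},\mathbf{t})$ denotes the submatrix of $G$ formed by the rows with indices in $\mathbf{s}$ and the columns with indices in $\mathbf{t}$ (the rank of a submatrix with no rows or no columns is $0$). *)

From HB Require Import structures.
From mathcomp Require Import all_boot all_order all_algebra.
Set Implicit Arguments. Unset Strict Implicit. Unset Printing Implicit Defensive.
Import GRing.Theory.
Local Open Scope ring_scope.

(* The submatrix G(s, t): rows indexed by s, columns by t (in the enumeration
   order of the finite types; row/column order does not affect rank or
   nonsingularity). *)
Definition subG (F : fieldType) (S T : finType) (G : S -> T -> F)
  (s : {set S}) (t : {set T}) : 'M[F]_(#|s|, #|t|) :=
  \matrix_(i < #|s|, j < #|t|) G (enum_val i) (enum_val j).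

Definition nonsingular_sub (F : fieldType) (S T : finType) (G : S -> T -> F)
  (s : {set S}) (t : {set T}) : Prop :=
  exists e : #|t| = #|s|, castmx (erefl #|s|, e) (subG G s t) \in unitmx.

(* Consider the matroid on the disjoint union S + T in which a
   row index i stands for the row vector G i and a column index j for the
   unit vector e_j; its rank function is the dimension of the span.  For
   s ⊆ S and t ⊆ T let encode s t be the rows in s together with the columns
   outside t.  Projecting onto the coordinates in t shows
       rk (encode s t) = rank G(s, t) + |T \ t|,
   so encode s t is independent iff G(s, t) has full row rank.  Partition
   S + T into the blocks S_a (demand sz a) and T_b (demand |T_b| - tz b).
   Then a nonsingular transversal G(s, t) is exactly an independent set of
   the matroid meeting every demand, and Rado's theorem for partitions
   (proved below for an arbitrary submodular rank function, by contracting
   one element at a time) says such a set exists iff every union of blocks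
   has rank at least its total demand.  For the union of blocks indexed by
   encode I K this inequality is exactly the rank inequality of the theorem. *)
From HB Require Import structures.
From mathcomp Require Import all_boot all_order all_algebra.
From mathcomp Require Import zify.
Set Implicit Arguments. Unset Strict Implicit. Unset Printing Implicit Defensive.
Import GRing.Theory.

(* A matroid rank function on the subsets of a finite ground set [E]:
   monotone, submodular and bounded by cardinality.  [X] is independent
   when [r X = #|X|]. *)
Record rank_function (E : finType) (r : {set E} -> nat) : Prop := RankFunction {
  rank_mono : forall X Y : {set E}, X \subset Y -> r X <= r Y;
  rank_submod : forall X Y : {set E}, r (X :|: Y) + r (X :&: Y) <= r X + r Y;
  rank_card : forall X : {set E}, r X <= #|X| }.

Section RankFunction.

Variables (E : finType) (r : {set E} -> nat).
Hypothesis hr : rank_function r.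

Lemma rank_submodS (A B X Y : {set E}) :
  A \subset X :|: Y -> B \subset X :&: Y -> r A + r B <= r X + r Y.
Proof.
move=> sA sB; apply: leq_trans (rank_submod hr X Y).
by apply: leq_add; apply: rank_mono.
Qed.

Lemma rank_set0 : r set0 = 0.
Proof. by apply/eqP; rewrite -leqn0 -(cards0 E) rank_card. Qed.

Lemma indep_subset (X Y : {set E}) : r X = #|X| -> Y \subset X -> r Y = #|Y|.
Proof.
move=> rX sYX; apply/eqP; rewrite eqn_leq (rank_card hr) /=.
have split_X : X \subset Y :|: X :\: Y.
  by apply/subsetP=> x xX; rewrite !inE xX; case: (x \in Y).
have := rank_submodS split_X (sub0set (Y :&: (X :\: Y))).
have := rank_card hr (X :\: Y); have := cardsID Y X; rewrite (setIidPr sYX) rank_set0.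
lia.
Qed.

Lemma rank_closure (P Z : {set E}) :
  (forall e, e \in P -> r (e |: Z) <= r Z) -> r (P :|: Z) <= r Z.
Proof.
move=> hP; suff IH : forall Y : {set E}, Y \subset P -> r (Y :|: Z) <= r Z by exact: IH.
move=> Y; elim: {Y}#|Y| {-2}Y (erefl #|Y|) => [|n IH] Y cY sYP.
  by move/eqP: cY; rewrite cards_eq0 => /eqP ->; rewrite set0U.
have [e eY] : exists e, e \in Y by apply/card_gt0P; rewrite cY.
have cYe : #|Y :\ e| = n by move: cY; rewrite (cardsD1 e Y) eY => -[].
have rYe := IH (Y :\ e) cYe (subset_trans (subD1set Y e) sYP).
have cover : Y :|: Z \subset (e |: Z) :|: ((Y :\ e) :|: Z).
  by apply/subsetP=> x; rewrite !inE; case: (x == e); case: (x \in Y); case: (x \in Z).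
have common : Z \subset (e |: Z) :&: ((Y :\ e) :|: Z).
  by apply/subsetP=> x; rewrite !inE => ->; rewrite !orbT.
have := rank_submodS cover common; have := hP e (subsetP sYP e eY); lia.
Qed.

Lemma rank_increase_subset (e : E) (Y Z : {set E}) :
  Y \subset Z -> r Z < r (e |: Z) -> r Y < r (e |: Y).
Proof.
move=> sYZ hZ.
have cover : e |: Z \subset (e |: Y) :|: Z.
  by apply/subsetP=> x; rewrite !inE; case: (x == e) => //= ->; rewrite orbT.
have common : Y \subset (e |: Y) :&: Z.
  by apply/subsetP=> x xY; rewrite !inE xY orbT (subsetP sYZ).
have := rank_submodS cover common; lia.
Qed.

(* Contraction by a non-loop [e]: the rank function of the minor [M / e]. *)
Definition contract (e : E) (X : {set E}) : nat := r (e |: X) - 1.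

Section Contraction.

Variable e : E.
Hypothesis e_nonloop : 0 < r [set e].

Lemma rank_setU1_gt0 (X : {set E}) : 0 < r (e |: X).
Proof. by apply: leq_trans e_nonloop (rank_mono hr _); rewrite sub1set setU11. Qed.

Lemma contract_rank_function : rank_function (contract e).
Proof.
have posU := rank_setU1_gt0; split=> [X Y sXY | X Y | X]; rewrite /contract.
- by rewrite leq_sub2r // rank_mono // setUS.
- have := @rank_submodS (e |: (X :|: Y)) (e |: (X :&: Y)) (e |: X) (e |: Y).
  rewrite -setUUr -setUIr !subxx => /(_ isT isT).
  have := posU (X :|: Y); have := posU (X :&: Y); lia.
- have := rank_card hr (e |: X); rewrite cardsU1; have := leq_b1 (e \notin X); lia.
Qed.

Lemma contract_indep (X : {set E}) :
  contract e X = #|X| -> e \notin X /\ r (e |: X) = #|e |: X|.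
Proof.
rewrite /contract => rX; have eX : e \notin X.
  apply/negP=> eX; move: rX; rewrite (setUidPr _) ?sub1set //.
  have := rank_card hr X; have : 0 < #|X| by apply/card_gt0P; exists e.
  lia.
by split=> //; move: rX; rewrite cardsU1 eX; have := rank_setU1_gt0 X; lia.
Qed.

End Contraction.

End RankFunction.

Section Rado.

Variables (E K : finType) (part : E -> K).

Definition blocks (J : {set K}) : {set E} := [set x | part x \in J].

Definition rado_condition (r : {set E} -> nat) (c : K -> nat) : Prop :=
  forall J : {set K}, \sum_(k in J) c k <= r (blocks J).

Definition meets_demand (c : K -> nat) (X : {set E}) : Prop :=
  forall k, #|[set x in X | part x == k]| = c k.

Lemma card_blocks (X : {set E}) (J : {set K}) :
  #|X :&: blocks J| = \sum_(k in J) #|[set x in X | part x == k]|.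
Proof.
rewrite -sum1_card (partition_big part (fun k => k \in J)) => [|x]; last by rewrite !inE => /andP[].
apply: eq_bigr => k kJ; rewrite -sum1_card; apply: eq_bigl => x; rewrite !inE.
by have [->|] := eqVneq (part x) k; rewrite ?kJ ?andbT ?andbF.
Qed.

Lemma rado_necessary (r : {set E} -> nat) (c : K -> nat) (X : {set E}) :
  rank_function r -> r X = #|X| -> meets_demand c X -> rado_condition r c.
Proof.
move=> hr rX hX J; have rXJ := indep_subset hr rX (subsetIl X (blocks J)).
rewrite -(eq_bigr _ (fun k _ => hX k)) -card_blocks -rXJ.
by apply: rank_mono hr _ _ (subsetIr _ _).
Qed.

Lemma sum_setU_setI (f : K -> nat) (J1 J2 : {set K}) :
  \sum_(j in J1 :|: J2) f j + \sum_(j in J1 :&: J2) f j =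
  \sum_(j in J1) f j + \sum_(j in J2) f j.
Proof.
rewrite (@big_setID _ _ _ _ (J1 :|: J2) J1) (@big_setID _ _ _ _ J2 J1) setUK setDUl setDv set0U.
by rewrite setIC addnAC addnA.
Qed.

Definition lower_demand (c : K -> nat) (k : K) (j : K) : nat :=
  if j == k then (c k).-1 else c j.

Lemma sum_lower_demand (c : K -> nat) (k : K) :
  0 < c k -> \sum_j lower_demand c k j = (\sum_j c j).-1.
Proof.
move=> ck; rewrite (bigD1 k) //= [in RHS](bigD1 k) //= /lower_demand eqxx.
rewrite (eq_bigr c) => [|j /negbTE -> //]; lia.
Qed.

Lemma card_block_setU1 (X : {set E}) (e : E) (k : K) : e \notin X ->
  #|[set x in e |: X | part x == k]| = (part e == k) + #|[set x in X | part x == k]|.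
Proof.
move=> eX; have [<-|nek] := eqVneq (part e) k.
  have -> : [set x in e |: X | part x == part e] = e |: [set x in X | part x == part e].
    by apply/setP=> x; rewrite !inE; case: eqVneq => [->|]; rewrite ?eqxx.
  by rewrite cardsU1 inE (negbTE eX).
apply: eq_card => x; rewrite !inE; case: eqVneq => [->|] //=.
by rewrite (negbTE nek) andbF.
Qed.

Section RadoStep.

Variables (r : {set E} -> nat) (c : K -> nat) (k : K).
Hypotheses (hr : rank_function r) (hc : rado_condition r c) (ck : 0 < c k).

Definition tight (J : {set K}) : bool :=
  (k \notin J) && (r (blocks J) <= \sum_(j in J) c j).

Lemma tight_setU (J1 J2 : {set K}) : tight J1 -> tight J2 -> tight (J1 :|: J2).
Proof.
move=> /andP[k1 t1] /andP[k2 t2]; rewrite /tight inE negb_or k1 k2 /=.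
have cover : blocks (J1 :|: J2) \subset blocks J1 :|: blocks J2.
  by apply/subsetP=> x; rewrite !inE.
have common : blocks (J1 :&: J2) \subset blocks J1 :&: blocks J2.
  by apply/subsetP=> x; rewrite !inE.
have := rank_submodS hr cover common; have := hc (J1 :&: J2).
have := sum_setU_setI c J1 J2; lia.
Qed.

Lemma tight_set0 : tight set0.
Proof.
rewrite /tight inE big_set0 leqn0 (_ : blocks set0 = set0) ?rank_set0 //.
by apply/setP=> x; rewrite !inE.
Qed.

(* The tight sets are closed under union, so there is a largest one. *)
Lemma max_tight : exists2 Js, tight Js & forall J, tight J -> J \subset Js.
Proof.
have [Js tJs maxJs] := @arg_maxnP _ set0 tight (fun J => #|J|) tight_set0.
exists Js => // J tJ.
have /eqP-> : Js == J :|: Js by rewrite eqEcard subsetUr; apply: maxJs; exact: tight_setU.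
exact: subsetUl.
Qed.

(* Some element of block [k] lies outside the closure of a tight set,
   for otherwise Rado's condition would fail for [k |: Js]. *)
Lemma tight_augment (Js : {set K}) :
  tight Js -> exists2 e, part e = k & r (blocks Js) < r (e |: blocks Js).
Proof.
case/andP=> kJs tJs.
have [/existsP[e /andP[/eqP pe he]]|/existsPn none] :=
  boolP [exists e, (part e == k) && (r (blocks Js) < r (e |: blocks Js))].
  by exists e.
have closed : r (blocks [set k] :|: blocks Js) <= r (blocks Js).
  apply: (rank_closure hr) => x; rewrite !inE => /eqP px.
  by rewrite leqNgt; apply: contraNN (none x) => ->; rewrite px eqxx.
have := hc (k |: Js); rewrite big_setU1 //=.
rewrite (_ : blocks (k |: Js) = blocks [set k] :|: blocks Js); first lia.
by apply/setP=> x; rewrite !inE.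
Qed.

Lemma contract_condition (Js : {set K}) (e : E) :
  tight Js -> (forall J, tight J -> J \subset Js) ->
  part e = k -> r (blocks Js) < r (e |: blocks Js) ->
  rado_condition (contract r e) (lower_demand c k).
Proof.
move=> tJs maxJs pe he J; rewrite /contract.
have [kJ|kJ] := boolP (k \in J).
  rewrite (setUidPr _) ?sub1set ?inE ?pe // (big_setD1 k kJ) /= /lower_demand eqxx.
  rewrite (eq_bigr c) => [|j]; last by rewrite !inE => /andP[/negbTE ->].
  by have := hc J; rewrite (big_setD1 k kJ) /=; lia.
rewrite (eq_bigr c) => [|j jJ]; last first.
  by rewrite /lower_demand; case: eqVneq jJ kJ => // -> ->.
suff : \sum_(j in J) c j < r (e |: blocks J) by lia.
have [tJ|] := boolP (tight J).
  apply: leq_ltn_trans (hc J) _.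
  have sJ : blocks J \subset blocks Js.
    by apply/subsetP=> x; rewrite !inE => /(subsetP (maxJs J tJ)).
  exact: (rank_increase_subset hr sJ he).
rewrite /tight kJ /= -ltnNge => ntJ.
by apply: leq_trans ntJ (rank_mono hr _); rewrite subsetUr.
Qed.

Lemma rado_step : exists e,
  [/\ part e = k, 0 < r [set e] & rado_condition (contract r e) (lower_demand c k)].
Proof.
have [Js tJs maxJs] := max_tight; have [e pe he] := tight_augment tJs.
exists e; split=> //; last exact: contract_condition tJs maxJs pe he.
have := rank_submodS hr (subxx (e |: blocks Js)) (sub0set ([set e] :&: blocks Js)).
by rewrite (rank_set0 hr); lia.
Qed.

End RadoStep.

(* Rado's theorem: under Rado's condition some independent set meets the
   demand of every block exactly.  Induction on the total demand, contracting
   one element at a time. *)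
Theorem rado (r : {set E} -> nat) (c : K -> nat) :
  rank_function r -> rado_condition r c -> exists2 X, r X = #|X| & meets_demand c X.
Proof.
move: {2}(\sum_j c j) (erefl (\sum_j c j)) => N.
elim: N r c => [|N IH] r c sumc hr hc.
  exists set0; first by rewrite (rank_set0 hr) cards0.
  move=> k; move: sumc; rewrite (bigD1 k) //= => /eqP; rewrite addn_eq0 => /andP[/eqP -> _].
  by apply/eqP; rewrite cards_eq0; apply/eqP/setP=> x; rewrite !inE.
have [k ck] : exists k, 0 < c k.
  case: (pickP (fun k => 0 < c k)) => [k ck | c0]; first by exists k.
  by move: sumc; rewrite big1 // => k _; apply/eqP; rewrite -leqn0 leqNgt c0.
have [e [pe nonloop hce]] := rado_step hr hc ck.
have sumc' : \sum_j lower_demand c k j = N by rewrite sum_lower_demand // sumc.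
have [X rX hX] := IH _ _ sumc' (contract_rank_function hr nonloop) hce.
have [eX reX] := contract_indep hr nonloop rX.
exists (e |: X) => // j; rewrite card_block_setU1 // hX /lower_demand pe.
by case: eqVneq => [<-|]; rewrite ?add1n ?prednK.
Qed.

End Rado.

(* Its ground set is [S + T]: a row index [i]
   stands for the row vector [G i], a column index [j] for the unit vector
   [e_j]. *)
Section MatrixMatroid.

Local Open Scope ring_scope.

Variables (F : fieldType) (S T : finType) (G : S -> T -> F).

Lemma rank_span_le (I : finType) (k : nat) (X : {set I}) (v : I -> 'rV[F]_k) :
  (\rank (\sum_(i in X) <<v i>>)%MS <= #|X|)%N.
Proof.
rewrite -sum1_card.
apply: (big_ind2 (fun (M : 'M[F]_k) (d : nat) => \rank M <= d)%N).
- by rewrite mxrank0.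
- move=> A a B b hA hB; apply: leq_trans (mxrank_adds_leqif A B) _.
  exact: leq_add.
- by move=> i _; rewrite mxrank_gen rank_leq_row.
Qed.

Definition unit_row (j : T) : 'rV[F]_#|T| := delta_mx 0 (enum_rank j).

Definition ground_vec (x : S + T) : 'rV[F]_#|T| :=
  match x with inl i => \row_j G i (enum_val j) | inr j => unit_row j end.

Definition span_rank (X : {set S + T}) : nat :=
  \rank (\sum_(x in X) <<ground_vec x>>)%MS.

Lemma span_rank_function : rank_function span_rank.
Proof.
have sub_span (X : {set S + T}) x : x \in X -> (<<ground_vec x>> <= \sum_(y in X) <<ground_vec y>>)%MS.
  by move=> xX; apply: (sumsmx_sup x).
split=> [X Y sXY | X Y | X]; rewrite /span_rank.
- apply: mxrankS; apply/sumsmx_subP=> x xX; exact/sub_span/(subsetP sXY).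
- set sX := (\sum_(x in X) _)%MS; set sY := (\sum_(x in Y) _)%MS.
  apply: leq_trans (_ : _ <= \rank (sX + sY) + \rank (sX :&: sY))%N _; last by rewrite mxrank_sum_cap.
  apply: leq_add; apply: mxrankS.
    apply/sumsmx_subP=> x; rewrite inE => /orP[xX|xY].
      exact: submx_trans (sub_span X x xX) (addsmxSl _ _).
    exact: submx_trans (sub_span Y x xY) (addsmxSr _ _).
  rewrite sub_capmx; apply/andP; split; apply/sumsmx_subP=> x; rewrite inE => /andP[xX xY].
    exact: sub_span.
  exact: sub_span.
- exact: rank_span_le.
Qed.

Lemma rank_unit_rows (B : {set T}) :
  \rank (\sum_(j in B) <<unit_row j>>)%MS = #|B|.
Proof.
have spanT : ((1%:M : 'M[F]_#|T|) <=
    (\sum_(j in B) <<unit_row j>>) + (\sum_(j in ~: B) <<unit_row j>>))%MS.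
  apply/row_subP=> l; rewrite row1 -[l]enum_valK.
  have [lB|lB] := boolP (enum_val l \in B).
    by apply: submx_trans (addsmxSl _ _); apply: (sumsmx_sup (enum_val l)) => //; rewrite genmxE.
  apply: submx_trans (addsmxSr _ _); apply: (sumsmx_sup (enum_val l)); first by rewrite inE.
  by rewrite genmxE.
have := leq_trans (mxrankS spanT) (mxrank_adds_leqif _ _); rewrite mxrank1.
have := rank_span_le B unit_row; have := rank_span_le (~: B) unit_row.
by have := cardsC B; lia.
Qed.

(* Right multiplication by [col_select B] keeps the coordinates in [B]. *)
Definition col_select (B : {set T}) : 'M[F]_(#|T|, #|B|) :=
  (\matrix_(b < #|B|) unit_row (enum_val b))^T.

Lemma unit_row_select (B : {set T}) (j : T) :
  j \notin B -> unit_row j *m col_select B = 0.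
Proof.
move=> jB; apply/matrixP=> a b; rewrite ord1 -rowE !mxE (inj_eq enum_rank_inj).
by case: (eqVneq j (enum_val b)) jB => [->|]; rewrite ?enum_valP ?andbF.
Qed.

Lemma G_row_select (B : {set T}) (i : S) :
  \row_j G i (enum_val j) *m col_select B = \row_b G i (enum_val b).
Proof.
apply/matrixP=> a b; rewrite ord1 !mxE (bigD1 (enum_rank (enum_val b))) //= big1 => [|l nl].
  by rewrite !mxE enum_rankK !eqxx /= mulr1 addr0.
by rewrite !mxE (negbTE nl) andbF mulr0.
Qed.

Lemma rank_ker_select (B : {set T}) : \rank (kermx (col_select B)) = #|~: B|.
Proof.
have rankQ : \rank (col_select B) = #|B|.
  rewrite mxrank_tr -[X in _ = X](rank_unit_rows B) big_enum_val.
  apply/eqmx_rank/andP; split.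
    by apply/row_subP=> b; rewrite rowK; apply: (sumsmx_sup b) => //; rewrite genmxE.
  by apply/sumsmx_subP=> b _; rewrite genmxE -(rowK (fun b => unit_row (enum_val b))) row_sub.
by rewrite mxrank_ker rankQ; have := cardsC B; lia.
Qed.

Lemma unit_rows_ker (B : {set T}) :
  (\sum_(j in ~: B) <<unit_row j>> <= kermx (col_select B))%MS.
Proof.
apply/sumsmx_subP=> j; rewrite inE => jB.
by rewrite genmxE; apply/sub_kermxP; exact: unit_row_select.
Qed.

Definition encode (s : {set S}) (t : {set T}) : {set S + T} :=
  [set x | match x with inl i => i \in s | inr j => j \notin t end].

Lemma card_encode (s : {set S}) (t : {set T}) :
  #|encode s t| = (#|s| + #|~: t|)%N.
Proof.
rewrite -!sum1_card big_sumType /=.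
by congr (_ + _)%N; apply: eq_bigl => x; rewrite !inE.
Qed.

Lemma encodeK (X : {set S + T}) :
  encode [set i | inl i \in X] [set j | inr j \notin X] = X.
Proof. by apply/setP=> -[i|j]; rewrite !inE ?negbK. Qed.

Lemma rank_encode_select (s : {set S}) (t : {set T}) :
  \rank ((\sum_(x in encode s t) <<ground_vec x>>)%MS *m col_select t) =
  \rank (subG G s t).
Proof.
apply/eqmx_rank/andP; split.
  rewrite (sumsmxMr_gen _ _ (col_select t)); apply/sumsmx_subP=> -[i|j] x_st.
    rewrite genmxE (eqmxMr _ (genmxE _)) G_row_select.
    have i_s : i \in s by move: x_st; rewrite inE.
    rewrite (_ : \row_b _ = row (enum_rank_in i_s i) (subG G s t)) ?row_sub //.
    by apply/rowP=> b; rewrite !mxE enum_rankK_in.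
  rewrite genmxE (eqmxMr _ (genmxE _)) unit_row_select ?sub0mx //.
  by move: x_st; rewrite inE.
apply/row_subP=> a.
rewrite (_ : row a _ = \row_j G (enum_val a) (enum_val j) *m col_select t).
  apply: submxMr; apply: (sumsmx_sup (inl (enum_val a))); first by rewrite inE enum_valP.
  by rewrite genmxE.
by rewrite G_row_select; apply/rowP=> b; rewrite !mxE.
Qed.

Lemma span_rank_encode (s : {set S}) (t : {set T}) :
  span_rank (encode s t) = (\rank (subG G s t) + #|~: t|)%N.
Proof.
rewrite /span_rank -(mxrank_mul_ker _ (col_select t)) rank_encode_select.
have ker_units : (kermx (col_select t) <= \sum_(j in ~: t) <<unit_row j>>)%MS.
  by rewrite -(mxrank_leqif_sup (unit_rows_ker t)) rank_unit_rows rank_ker_select.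
have ker_W : (kermx (col_select t) <= \sum_(x in encode s t) <<ground_vec x>>)%MS.
  apply: submx_trans ker_units _; apply/sumsmx_subP=> j jt.
  by apply: (sumsmx_sup (inr j)); rewrite ?inE -?in_setC.
by rewrite (capmx_idPr ker_W) rank_ker_select.
Qed.

Lemma mxrank_castmx (p q p' q' : nat) (e : (p = p') * (q = q')) (M : 'M[F]_(p, q)) :
  \rank (castmx e M) = \rank M.
Proof. by case: e => ep eq; subst p' q'; rewrite castmx_id. Qed.

Lemma nonsingular_subP (s : {set S}) (t : {set T}) :
  nonsingular_sub G s t <-> #|t| = #|s| /\ \rank (subG G s t) = #|s|.
Proof.
split=> [[e unitG] | [e rankG]].
  by split=> //; rewrite -(mxrank_castmx (erefl #|s|, e)) (mxrank_unit unitG).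
by exists e; rewrite -row_free_unit /row_free mxrank_castmx rankG.
Qed.

Lemma indep_encodeP (s : {set S}) (t : {set T}) :
  span_rank (encode s t) = #|encode s t| <-> \rank (subG G s t) = #|s|.
Proof. by rewrite span_rank_encode card_encode; split=> h; lia. Qed.

End MatrixMatroid.

Section BlockPartition.

Variables (X K : finType) (B : K -> {set X}).

Lemma partition_index :
  (forall a b, a != b -> [disjoint B a & B b]) -> \bigcup_a B a = [set: X] ->
  exists idx : X -> K, forall x a, (x \in B a) = (idx x == a).
Proof.
move=> disjB coverB.
have ex_block x : exists a, x \in B a.
  have /bigcupP[a _ xa] : x \in \bigcup_a B a by rewrite coverB inE.
  by exists a.
exists (fun x => xchoose (ex_block x)) => x a; have xB := xchooseP (ex_block x).
apply/idP/eqP=> [xa|<- //]; apply/eqP; apply: contraT => neq.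
by rewrite (disjointFr (disjB _ _ neq) xB) in xa.
Qed.

Variable idx : X -> K.
Hypothesis memB : forall x a, (x \in B a) = (idx x == a).

Lemma mem_bigcup_blocks (J : {set K}) (x : X) :
  (x \in \bigcup_(a in J) B a) = (idx x \in J).
Proof.
apply/bigcupP/idP=> [[a aJ]|xJ]; first by rewrite memB => /eqP ->.
by exists (idx x); rewrite ?memB.
Qed.

Lemma card_split_blocks (A : {set X}) : #|A| = \sum_a #|A :&: B a|.
Proof.
rewrite -sum1_card (partition_big idx xpredT) //; apply: eq_bigr => a _.
by rewrite -sum1_card; apply: eq_bigl => x; rewrite !inE memB.
Qed.

Lemma bigcup_meet_blocks (A : {set X}) : \bigcup_a (A :&: B a) = A.
Proof.
apply/setP=> x; apply/bigcupP/idP=> [[a _ /setIP[]] //|xA].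
by exists (idx x); rewrite // inE xA memB eqxx.
Qed.

Lemma bigcup_subsets_meet (P : K -> {set X}) :
  (forall a, P a \subset B a) -> forall a, (\bigcup_b P b) :&: B a = P a.
Proof.
move=> sPB a; apply/setP=> x; rewrite inE; apply/andP/idP=> [[/bigcupP[b _ xb] xa]|xa].
  by move: (subsetP (sPB b) x xb) xa; rewrite !memB => /eqP-> /eqP<-.
by split; [apply/bigcupP; exists a | apply: (subsetP (sPB a))].
Qed.

End BlockPartition.

(* Rado's theorem is applied to the matroid on [S + T] with blocks
   [inl a ~ Sb a] of demand [sz a] and [inr b ~ Tb b] of demand [|Tb b| - tz b]:
   an independent set meeting these demands is exactly [encode s t] for a
   transversal [s, t] with [G(s, t)] nonsingular. *)
Section Transversal.

Variables (F : fieldType) (S T : finType) (G : S -> T -> F) (m n : nat).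
Variables (Sb : 'I_m -> {set S}) (Tb : 'I_n -> {set T}).
Variables (idxS : S -> 'I_m) (idxT : T -> 'I_n).
Hypotheses (memS : forall i a, (i \in Sb a) = (idxS i == a))
           (memT : forall j b, (j \in Tb b) = (idxT j == b)).
Variables (sz : 'I_m -> nat) (tz : 'I_n -> nat) (R : nat).

Definition part (x : S + T) : 'I_m + 'I_n :=
  match x with inl i => inl (idxS i) | inr j => inr (idxT j) end.

Definition demand (k : 'I_m + 'I_n) : nat :=
  match k with inl a => sz a | inr b => #|Tb b| - tz b end.

Definition transversal_exists : Prop :=
  exists (ss : 'I_m -> {set S}) (tt : 'I_n -> {set T}),
    (forall a, ss a \subset Sb a /\ #|ss a| = sz a) /\
    (forall b, tt b \subset Tb b /\ #|tt b| = tz b) /\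
    nonsingular_sub G (\bigcup_(a < m) ss a) (\bigcup_(b < n) tt b).

Definition rank_condition : Prop :=
  forall (I : {set 'I_m}) (K : {set 'I_n}),
    \sum_(a in I) sz a + \sum_(b in K) tz b - R <=
    \rank (subG G (\bigcup_(a in I) Sb a) (\bigcup_(b in K) Tb b)).

Lemma blocks_encode (I : {set 'I_m}) (K : {set 'I_n}) :
  blocks part (encode I K) = encode (\bigcup_(a in I) Sb a) (\bigcup_(b in K) Tb b).
Proof.
by apply/setP=> -[i|j]; rewrite !inE /= (mem_bigcup_blocks memS, mem_bigcup_blocks memT).
Qed.

Lemma count_encode_inl (s : {set S}) (t : {set T}) (a : 'I_m) :
  #|[set x in encode s t | part x == inl a]| = #|s :&: Sb a|.
Proof.
rewrite -[RHS]addn0 -(cards0 T) -setCT -card_encode; apply: eq_card => -[i|j].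
  by rewrite !inE memS.
by rewrite !inE andbF.
Qed.

Lemma count_encode_inr (s : {set S}) (t : {set T}) (b : 'I_n) :
  #|[set x in encode s t | part x == inr b]| = #|Tb b :\: t|.
Proof.
rewrite -[RHS]add0n -(cards0 S) -[Tb b :\: t]setCK -card_encode; apply: eq_card => -[i|j].
  by rewrite !inE andbF.
by rewrite !inE negbK memT andbC.
Qed.

Lemma meets_demand_encode (s : {set S}) (t : {set T}) :
  meets_demand part demand (encode s t) <->
  (forall a, #|s :&: Sb a| = sz a) /\ (forall b, #|Tb b :\: t| = #|Tb b| - tz b).
Proof.
split=> [h | [hS hT] [a|b]]; last 2 first.
- by rewrite count_encode_inl.
- by rewrite count_encode_inr.
by split=> [a|b]; [rewrite -(count_encode_inl s t) | rewrite -(count_encode_inr s t)]; exact: h.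
Qed.

(* Every column block is at least as large as its demand [tz b]; this follows
   from either side of the theorem. *)
Definition columns_fit : Prop := forall b, tz b <= #|Tb b|.

Lemma transversal_fit : transversal_exists -> columns_fit.
Proof. by case=> ss [tt [_ [htt _]]] b; case: (htt b) => sub <-; exact: subset_leq_card. Qed.

Lemma card_compl_bigcup (K : {set 'I_n}) :
  #|~: \bigcup_(b in K) Tb b| = \sum_(b in ~: K) #|Tb b|.
Proof.
rewrite (_ : ~: _ = [set: T] :&: blocks idxT (~: K)) ?card_blocks.
  by apply: eq_bigr => b _; apply: eq_card => j; rewrite !inE memT.
by apply/setP=> j; rewrite !inE (mem_bigcup_blocks memT).
Qed.

Lemma sum_demand_encode (I : {set 'I_m}) (K : {set 'I_n}) :
  \sum_(k in encode I K) demand k =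
  \sum_(a in I) sz a + \sum_(b in ~: K) (#|Tb b| - tz b).
Proof. by rewrite big_sumType; congr (_ + _); apply: eq_bigl => ?; rewrite !inE. Qed.

Lemma transversal_indep :
  transversal_exists -> exists2 X, span_rank G X = #|X| & meets_demand part demand X.
Proof.
case=> ss [tt [hss [htt /nonsingular_subP[_ rank_s]]]].
exists (encode (\bigcup_a ss a) (\bigcup_b tt b)); first exact/indep_encodeP.
have ssS a : ss a \subset Sb a by case: (hss a).
have ttT b : tt b \subset Tb b by case: (htt b).
apply/meets_demand_encode; split=> [a|b].
  by rewrite (bigcup_subsets_meet memS ssS) (hss a).2.
have := cardsID (\bigcup_b tt b) (Tb b).
by rewrite setIC (bigcup_subsets_meet memT ttT) (htt b).2; lia.
Qed.

Hypotheses (hs : \sum_(a < m) sz a = R) (ht : \sum_(b < n) tz b = R).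

Lemma rank_condition_fit : rank_condition -> columns_fit.
Proof.
move=> hcond b; have := hcond setT [set b].
set M := subG G _ _; have := rank_leq_col M; move: (\rank M) => rankM.
rewrite !big_set1 (eq_bigl xpredT) ?hs => [|a]; last by rewrite inE.
lia.
Qed.

Section Fit.

Hypothesis fit : columns_fit.

Lemma rado_condition_encode (I : {set 'I_m}) (K : {set 'I_n}) :
  (\sum_(k in encode I K) demand k <= span_rank G (blocks part (encode I K))) =
  (\sum_(a in I) sz a + \sum_(b in K) tz b - R <=
   \rank (subG G (\bigcup_(a in I) Sb a) (\bigcup_(b in K) Tb b))).
Proof.
rewrite sum_demand_encode blocks_encode span_rank_encode card_compl_bigcup.
have splitR : R = \sum_(b in K) tz b + \sum_(b in ~: K) tz b.
  by rewrite -ht (bigID (mem K)) /=; congr addn; apply: eq_bigl => b; rewrite inE.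
have splitT : \sum_(b in ~: K) (#|Tb b| - tz b) + \sum_(b in ~: K) tz b =
    \sum_(b in ~: K) #|Tb b|.
  by rewrite -big_split; apply: eq_bigr => b _ /=; rewrite subnK.
by apply/idP/idP; lia.
Qed.

Lemma rado_condition_iff : rado_condition part (span_rank G) demand <-> rank_condition.
Proof.
split=> [h I K | h J]; first by rewrite -rado_condition_encode.
by rewrite -(encodeK J) rado_condition_encode.
Qed.

Lemma indep_transversal (X : {set S + T}) :
  span_rank G X = #|X| -> meets_demand part demand X -> transversal_exists.
Proof.
rewrite -(encodeK X); set s := [set i | _]; set t := [set j | _].
move=> /indep_encodeP rank_s /meets_demand_encode[hS hT].
have hT' b : #|t :&: Tb b| = tz b.
  by have := cardsID t (Tb b); rewrite setIC hT; have := fit b; lia.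
exists (fun a => s :&: Sb a), (fun b => t :&: Tb b).
rewrite (bigcup_meet_blocks memS) (bigcup_meet_blocks memT).
split; [by move=> a; rewrite subsetIr hS | split; first by move=> b; rewrite subsetIr hT'].
apply/nonsingular_subP; split=> //.
rewrite (card_split_blocks memS) (card_split_blocks memT).
by rewrite (eq_bigr _ (fun a _ => hS a)) (eq_bigr _ (fun b _ => hT' b)) hs ht.
Qed.

End Fit.

End Transversal.

Unset Implicit Arguments.

Theorem theorem1 (F : fieldType) (S T : finType) (G : S -> T -> F)
  (m n : nat) (Sb : 'I_m -> {set S}) (Tb : 'I_n -> {set T})
  (hSdisj : forall i j : 'I_m, i != j -> [disjoint Sb i & Sb j])
  (hScov : \bigcup_(i < m) Sb i = [set: S])
  (hTdisj : forall j k : 'I_n, j != k -> [disjoint Tb j & Tb k])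
  (hTcov : \bigcup_(j < n) Tb j = [set: T])
  (sz : 'I_m -> nat) (tz : 'I_n -> nat) (R : nat)
  (hs : (\sum_(i < m) sz i)%N = R) (ht : (\sum_(j < n) tz j)%N = R) :
  (exists (ss : 'I_m -> {set S}) (tt : 'I_n -> {set T}),
      (forall i, ss i \subset Sb i /\ #|ss i| = sz i) /\
      (forall j, tt j \subset Tb j /\ #|tt j| = tz j) /\
      nonsingular_sub G (\bigcup_(i < m) ss i) (\bigcup_(j < n) tt j))
  <->
  (forall (I : {set 'I_m}) (K : {set 'I_n}),
      (\sum_(i in I) sz i + \sum_(k in K) tz k - R <=
       mxrank (subG G (\bigcup_(i in I) Sb i) (\bigcup_(k in K) Tb k)))%N).
Proof.
have [idxS memS] := partition_index hSdisj hScov.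
have [idxT memT] := partition_index hTdisj hTcov.
have matroid := span_rank_function G.
split=> [has_transversal | rank_cond].
- have fit := transversal_fit has_transversal.
  apply: (rado_condition_iff G memS memT hs ht fit).1.
  have [X indepX demandX] := transversal_indep memS memT has_transversal.
  exact: rado_necessary matroid indepX demandX.
- have fit := rank_condition_fit hs ht rank_cond.
  have [X indepX demandX] := rado matroid ((rado_condition_iff G memS memT hs ht fit).2 rank_cond).
  exact: (indep_transversal memS memT hs ht fit indepX demandX).
Qed.
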